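(* With $\bar X$, $\bar s$, $\bar G$, $\bar C$ as below, let $\varphi:\bar X\to\mathbb{R}$ be continuous, let $\bar\varphi$ be the filtering function on $\bar C$ induced by $\varphi$, and let $\varphi':S^2\to\mathbb{R}$, $\varphi'(x_1,x_2,x_3)=\max\{\varphi(x_1,x_2,x_3,1),\varphi(x_1,x_2,x_3,-1)\}$. Then for every $n$ the persistent Betti number function $\rho^{\bar\varphi}_n$ of the $\bar G$-chain complex $\bar C$ equals the classical persistent Betti number function $\rho^{\varphi'}_n$ of $\varphi'$ on $S^2$ (singular homology of sublevel sets over $\mathbb{K}$).
   Context: $\bar X=X_+\cup X_-\subset\mathbb{R}^4$ with $X_\pm=\{(x_1,x_2,x_3,x_4):x_1^2+x_2^2+x_3^2=1,\ x_4=\pm1\}$; $\bar s(x_1,x_2,x_3,x_4)=(x_1,x_2,x_3,-x_4)$; $\bar G$ is the group of maps $(x_1,x_2,x_3,x_4)\mapsto(\tilde g(x_1,x_2,x_3),x_4)$ with $\tilde g$ an isometry of $S^2$; $\bar C\subseteq S(\bar X)$ is the subcomplex of chains of the form $\sum_r a^r(\sigma_{j_r}+\bar s\circ\sigma_{j_r})$. Induced filtering function: $\bar\varphi(0)=-\infty$; for a non-null chain in reduced form $\sum_r a^r\sigma_{j_r}$ (distinct simplices, nonzero coefficients), $\bar\varphi$ is the maximum of $\varphi$ on $\bigcup_r\sigma_{j_r}(\Delta_n)$. PBNF of $\bar C$: for $u<v$, $\rho^{\bar\varphi}_n(u,v)$ is the rank of the image of $H_n(\bar C^{\bar\varphi\le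 u})\to H_n(\bar C^{\bar\varphi\le v})$, with $\bar C^{\bar\varphi\le u}_n=\{c\in\bar C_n:\bar\varphi(c)\le u\}$. Classical PBNF: $\rho^{\varphi'}_n(u,v)$ is the rank of the image of $H_n(\{\varphi'\le u\})\to H_n(\{\varphi'\le v\})$. *)

From HB Require Import structures.
From mathcomp Require Import all_boot all_order all_algebra.
From mathcomp Require Import all_classical all_reals all_analysis.
Unset Printing Implicit Defensive.
Import Order.TTheory GRing.Theory Num.Theory.
Import numFieldNormedType.Exports.
Local Open Scope classical_set_scope.
Local Open Scope ring_scope.

Section Singular.
Variable R : realType.

Definition stdsimplex (n : nat) : set 'rV[R]_n.+1 :=
  [set x | (forall i, 0 <= x ord0 i) /\ \sum_(i < n.+1) x ord0 i = 1].

(* a singular n-simplex in a subset Y of R^m.  To have canonical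
   representatives, maps are normalized to be 0 outside Delta_n. *)
Definition sing_simplex (m n : nat) (Y : set 'rV[R]_m)
    (s : 'rV[R]_n.+1 -> 'rV[R]_m) : Prop :=
  [/\ {within stdsimplex n, continuous s},
      s @` stdsimplex n `<=` Y &
      forall x, ~ stdsimplex n x -> s x = 0].

Definition face_incl (n : nat) (i : 'I_n.+2) (x : 'rV[R]_n.+1) : 'rV[R]_n.+2 :=
  \row_j (if unlift i j is Some j' then x ord0 j' else 0).

Definition face (m n : nat) (s : 'rV[R]_n.+2 -> 'rV[R]_m) (i : 'I_n.+2)
  : 'rV[R]_n.+1 -> 'rV[R]_m :=
  fun x => if `[< stdsimplex n x >] then s (face_incl n i x) else 0.

Variable K : fieldType.

Definition sing_chain (m n : nat) (Y : set 'rV[R]_m)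
    (c : ('rV[R]_n.+1 -> 'rV[R]_m) -> K) : Prop :=
  finite_set [set s | c s != 0] /\ [set s | c s != 0] `<=` sing_simplex m n Y.

Definition bdry (m n : nat) (c : ('rV[R]_n.+2 -> 'rV[R]_m) -> K)
  : ('rV[R]_n.+1 -> 'rV[R]_m) -> K :=
  fun t => (\sum_(s \in [set s | c s != 0])
              c s * \sum_(i < n.+2) (-1) ^+ i * (if face m n s i == t then 1 else 0))%R.

(* a graded family of sets of chains (a subcomplex, or a filtration level) *)
Definition chains_family (m : nat) :=
  forall n : nat, set (('rV[R]_n.+1 -> 'rV[R]_m) -> K).

Definition cycles (m : nat) (A : chains_family m) (n : nat) :
    set (('rV[R]_n.+1 -> 'rV[R]_m) -> K) :=
  match n with
  | 0 => A 0
  | n'.+1 => fun c => A n'.+1 c /\ bdry m n' c = (fun _ => 0)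
  end.

Definition boundaries (m : nat) (A : chains_family m) (n : nat) :
    set (('rV[R]_n.+1 -> 'rV[R]_m) -> K) :=
  [set bdry m n d | d in A n.+1].

(* rank of the image of H_n(A) -> H_n(B) (for A a subcomplex of B) is >= k:
   there are k cycles of A whose classes are linearly independent in H_n(B). *)
Definition pbn_ge (m : nat) (A B : chains_family m) (n k : nat) : Prop :=
  exists cs : 'I_k -> (('rV[R]_n.+1 -> 'rV[R]_m) -> K),
    (forall r, cycles m A n (cs r)) /\
    forall a : 'I_k -> K,
      boundaries m B n (fun t => \sum_(r < k) a r * cs r t) ->
      forall r, a r = 0.

(* PBN equality: equal ranks (as elements of nat u {infinity}) *)
Definition pbn_equal (m m' : nat) (A B : chains_family m) (A' B' : chains_family m')
    (n : nat) : Prop :=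
  forall k, pbn_ge m A B n k <-> pbn_ge m' A' B' n k.

End Singular.

Section Spheres.
Variable R : realType.

Definition S2 : set 'rV[R]_3 :=
  [set x | x ord0 0 ^+ 2 + x ord0 1 ^+ 2 + x ord0 2 ^+ 2 = 1].

Definition ext4 (x : 'rV[R]_3) (t : R) : 'rV[R]_4 :=
  \row_(j < 4) (if j == 3 :> nat then t else x ord0 (inord j)).

Definition Xbar : set 'rV[R]_4 :=
  [set y | exists2 x, S2 x & (y = ext4 x 1 \/ y = ext4 x (-1))].

Definition sbar (y : 'rV[R]_4) : 'rV[R]_4 :=
  \row_(j < 4) (if j == 3 :> nat then - y ord0 j else y ord0 j).

Variable K : fieldType.

Definition Cbar (n : nat) : set (('rV[R]_n.+1 -> 'rV[R]_4) -> K) :=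
  [set c | exists (p : nat) (a : 'I_p -> K) (ss : 'I_p -> 'rV[R]_n.+1 -> 'rV[R]_4),
     (forall r, sing_simplex R 4 n Xbar (ss r)) /\
     c = fun t => \sum_(r < p) a r *
                   ((if ss r == t then 1 else 0) + (if sbar \o ss r == t then 1 else 0))].

(* the induced filtering function phibar: -oo on 0, else the max of phi on the
   union of the images of the simplices in the reduced form *)
Definition phibar (phi : 'rV[R]_4 -> R) (n : nat)
    (c : ('rV[R]_n.+1 -> 'rV[R]_4) -> K) : \bar R :=
  ereal_sup [set (phi (s x))%:E | s in [set s | c s != 0] & x in stdsimplex R n].

Definition Cbar_sub (phi : 'rV[R]_4 -> R) (u : R) : chains_family R K 4 :=
  fun n => [set c | sing_chain R K 4 n Xbar c /\ Cbar n c /\ (phibar phi n c <= u%:E)%E].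

Definition phi' (phi : 'rV[R]_4 -> R) (x : 'rV[R]_3) : R :=
  Num.max (phi (ext4 x 1)) (phi (ext4 x (-1))).

Definition S2_sub (f : 'rV[R]_3 -> R) (u : R) : chains_family R K 3 :=
  fun n => sing_chain R K 3 n (S2 `&` [set x | f x <= u]).

End Spheres.

From HB Require Import structures.
From mathcomp Require Import all_boot all_order all_algebra.
From mathcomp Require Import all_classical all_reals all_analysis.
From mathcomp Require Import ring lra.
Set Implicit Arguments.
Unset Strict Implicit.
Unset Printing Implicit Defensive.
Import Order.TTheory GRing.Theory Num.Theory.
Import numFieldNormedType.Exports.
Local Open Scope classical_set_scope.
Local Open Scope ring_scope.

(* A singular simplex of Xbar has a connected domain and the last coordinate
   takes only the values 1 and -1 on Xbar, so the simplex stays in one sheet: it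
   is the lift s x {1} of a simplex s of S^2 or its mirror image
   sbar o (s x {1}).  Hence d |-> sum_s d(s) (s x {1} + sbar o (s x {1})) is an
   isomorphism of chain complexes from the singular chains of S^2 onto Cbar.
   phibar of the image of d is at most u exactly when phi(-, 1) and phi(-, -1),
   i.e. phi', are at most u on the simplices of d, so the isomorphism maps the
   sublevel complex of phi' at u onto that of phibar at u, for every u; and an
   isomorphism of filtered chain complexes preserves persistent Betti numbers. *)

Definition lincomb (R : realType) (K : fieldType) p n k (a : 'I_k -> K)
    (cs : 'I_k -> ('rV[R]_n.+1 -> 'rV[R]_p) -> K) : ('rV[R]_n.+1 -> 'rV[R]_p) -> K :=
  fun t => \sum_(r < k) a r * cs r t.

Lemma lincomb0 (R : realType) (K : fieldType) p n (a : 'I_0 -> K)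
    (cs : 'I_0 -> ('rV[R]_n.+1 -> 'rV[R]_p) -> K) :
  lincomb a cs = fun _ => 0.
Proof. by apply: funext => t; rewrite /lincomb big_ord0. Qed.

Lemma cycles_sub (R : realType) (K : fieldType) p (A : chains_family R K p) n c :
  cycles R K p A n c -> A n c.
Proof. by case: n c => [|n] c //= []. Qed.

Section FilteredIsomorphism.
Local Unset Implicit Arguments.
Variables (R : realType) (K : fieldType).
Local Notation chain p n := (('rV[R]_n.+1 -> 'rV[R]_p) -> K).

Variables (m m' : nat) (A B : chains_family R K m) (A' B' : chains_family R K m').
Variable F : forall n, chain m' n -> chain m n.
Variable N : forall n, set (chain m' n).

Hypothesis F_lincomb : forall n {k} (a : 'I_k -> K) cs,
  F n (lincomb a cs) = lincomb a (fun r => F n (cs r)).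
Hypothesis F_inj : forall n c c', N n c -> N n c' -> F n c = F n c' -> c = c'.
Hypothesis N_lincomb : forall n {k} (a : 'I_k -> K) cs,
  (forall r, N n (cs r)) -> N n (lincomb a cs).
Hypothesis N_bdry : forall n d, N n (bdry R K m' n d).
Hypothesis N_A' : forall n c, A' n c -> N n c.
Hypothesis F_bdry : forall n d, A' n.+1 d \/ B' n.+1 d ->
  bdry R K m n (F n.+1 d) = F n (bdry R K m' n d).
Hypothesis F_A : forall n c, A' n c -> A n (F n c).
Hypothesis F_B : forall n c, B' n c -> B n (F n c).
Hypothesis F_A_onto : forall n c, A n c -> exists2 c', A' n c' & c = F n c'.
Hypothesis F_B_onto : forall n c, B n c -> exists2 c', B' n c' & c = F n c'.

Let F0 n : F n (fun _ => 0) = fun _ => 0.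
Proof.
have := F_lincomb n (fun _ : 'I_0 => 0) (fun _ => fun _ => 0).
by rewrite !lincomb0.
Qed.

Let N0 n : N n (fun _ => 0).
Proof.
have := N_lincomb n (fun _ : 'I_0 => 0) (fun _ => fun _ => 0).
by rewrite lincomb0; apply => -[].
Qed.

Lemma cycles_iso n c : cycles R K m' A' n c -> cycles R K m A n (F n c).
Proof.
case: n c => [|n] c /=; first exact: F_A.
by move=> [A'c bc0]; split; [exact: F_A | rewrite F_bdry; [rewrite bc0 F0 | left]].
Qed.

Lemma cycles_iso_onto n c : cycles R K m A n c ->
  exists2 c', cycles R K m' A' n c' & c = F n c'.
Proof.
case: n c => [|n] c /=; first exact: F_A_onto.
move=> [/F_A_onto [c' A'c' ->] bc0]; exists c' => //; split => //.
apply: F_inj; [exact: N_bdry | exact: N0 |].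
by rewrite -F_bdry; [rewrite bc0 F0 | left].
Qed.

Lemma boundaries_iso n c :
  boundaries R K m' B' n c -> boundaries R K m B n (F n c).
Proof.
move=> [d B'd <-]; exists (F n.+1 d); first exact: F_B.
by rewrite F_bdry //; right.
Qed.

Lemma boundaries_iso_onto n c :
  N n c -> boundaries R K m B n (F n c) -> boundaries R K m' B' n c.
Proof.
move=> Nc [_ /F_B_onto [d B'd ->] bd]; exists d => //.
by apply: F_inj => //; rewrite -F_bdry //; right.
Qed.

Lemma pbn_ge_iso n k : pbn_ge R K m A B n k -> pbn_ge R K m' A' B' n k.
Proof.
move=> [cs [cyc indep]].
have /choice [cs' cs'P] r : exists c', cycles R K m' A' n c' /\ cs r = F n c'.
  by have [c' ? ?] := cycles_iso_onto _ _ (cyc r); exists c'.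
have csE : (fun r => F n (cs' r)) = cs by apply: funext => r; rewrite (cs'P r).2.
exists cs'; split=> [r|a B'a]; first exact: (cs'P r).1.
apply: indep; change (boundaries R K m B n (lincomb a cs)).
by rewrite -csE -F_lincomb; apply: boundaries_iso.
Qed.

Lemma pbn_ge_iso_inv n k : pbn_ge R K m' A' B' n k -> pbn_ge R K m A B n k.
Proof.
move=> [cs [cyc indep]]; exists (fun r => F n (cs r)); split=> [r|a Ba].
  exact: cycles_iso.
apply: indep; apply: (@boundaries_iso_onto n (lincomb a cs)).
  by apply: N_lincomb => r; exact/N_A'/(cycles_sub (cyc r)).
by rewrite F_lincomb.
Qed.

Lemma pbn_equal_iso n : pbn_equal R K m m' A B A' B' n.
Proof. by move=> k; split; [exact: pbn_ge_iso | exact: pbn_ge_iso_inv]. Qed.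

End FilteredIsomorphism.

Lemma mx_continuous (R : numFieldType) (T : topologicalType) m n
    (f : T -> 'M[R]_(m, n)) :
  (forall i j, continuous (fun x => f x i j)) -> continuous f.
Proof.
move=> cf x A [P Pnb PA].
have : \forall y \near x, forall i j, P i j (f y i j).
  apply: filter_forall => i; apply: filter_forall => j.
  exact: (cf i j x _ (Pnb i j)).
by apply: filterS => y Py; apply: PA.
Qed.

Section StandardSimplex.
Variable R : realType.

Definition vertex0 n : 'rV[R]_n.+1 := \row_(j < n.+1) (j == 0 :> nat)%:R.

Lemma stdsimplex_vertex0 n : stdsimplex R n (vertex0 n).
Proof.
split=> [i|]; first by rewrite mxE ler0n.
by rewrite big_ord_recl mxE /= big1 ?addr0 // => i _; rewrite mxE.
Qed.

Definition star_path {n} (x : 'rV[R]_n.+1) (t : R) : 'rV[R]_n.+1 :=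
  \row_j (vertex0 n ord0 j + t * (x ord0 j - vertex0 n ord0 j)).

Lemma star_path_continuous n (x : 'rV[R]_n.+1) : continuous (star_path x).
Proof.
apply: mx_continuous => i j; rewrite /star_path.
under eq_fun do rewrite mxE.
move=> t; apply: cvgD; first exact: cvg_cst.
by apply: cvgM; [exact: cvg_id | exact: cvg_cst].
Qed.

Lemma stdsimplex_star_path n (x : 'rV[R]_n.+1) t : stdsimplex R n x -> 0 <= t <= 1 ->
  stdsimplex R n (star_path x t).
Proof.
have [v0 v1] := stdsimplex_vertex0 n.
move=> [x0 x1] /andP[t0 t1]; split=> [i|].
  rewrite mxE; have -> : vertex0 n ord0 i + t * (x ord0 i - vertex0 n ord0 i)
     = (1 - t) * vertex0 n ord0 i + t * x ord0 i by ring.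
  by apply: addr_ge0; apply: mulr_ge0; rewrite ?subr_ge0.
under eq_bigr do rewrite mxE.
by rewrite big_split /= -mulr_sumr sumrB x1 v1 subrr mulr0 addr0.
Qed.

Lemma star_path0 n (x : 'rV[R]_n.+1) : star_path x 0 = vertex0 n.
Proof. by apply/rowP => j; rewrite !mxE mul0r addr0. Qed.

Lemma star_path1 n (x : 'rV[R]_n.+1) : star_path x 1 = x.
Proof. by apply/rowP => j; rewrite !mxE mul1r addrC subrK. Qed.

Lemma stdsimplex_connected n : connected (stdsimplex R n).
Proof.
have -> : stdsimplex R n = \bigcup_(x in stdsimplex R n) (star_path x @` `[0, 1]).
  apply/seteqP; split => [x sx|y [x sx [t t01 <-]]].
    exists x => //; exists 1; last exact: star_path1.
    by rewrite /= in_itv /= lexx ler01.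
  by apply: stdsimplex_star_path => //; move: t01; rewrite /= in_itv.
apply: bigcup_connected.
  exists (vertex0 n) => x _; exists 0; last exact: star_path0.
  by rewrite /= in_itv /= lexx ler01.
move=> x _; apply: connected_continuous_connected; first exact: segment_connected.
exact/continuous_subspaceT/star_path_continuous.
Qed.

End StandardSimplex.

Section Sheets.
Variable R : realType.

Definition proj3 (y : 'rV[R]_4) : 'rV[R]_3 :=
  \row_(j < 3) y ord0 (widen_ord (leqnSn 3) j).

Lemma proj3_ext4 x t : proj3 (ext4 R x t) = x.
Proof.
apply/rowP => j; rewrite !mxE /=.
have -> : (j == 3 :> nat) = false by case: j => [[|[|[|]]]].
by congr (x ord0 _); apply: val_inj => /=; rewrite inordK.
Qed.

Lemma ext4_last x t : ext4 R x t ord0 3 = t.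
Proof. by rewrite mxE. Qed.

Lemma ext4_proj3 y : y = ext4 R (proj3 y) (y ord0 3).
Proof.
apply/rowP => j; rewrite !mxE; case: ifP => [/eqP j3|j3].
  by congr (y ord0 _); apply: val_inj.
congr (y ord0 _); apply: val_inj => /=; rewrite inordK //.
by case: j j3 => [[|[|[|[|]]]]].
Qed.

Lemma sbar_ext4 x t : sbar R (ext4 R x t) = ext4 R x (- t).
Proof. by apply/rowP => j; rewrite !mxE; case: ifP => j3; rewrite j3. Qed.

Lemma sbar0 : sbar R 0 = 0.
Proof. by apply/rowP => j; rewrite !mxE oppr0; case: ifP. Qed.

Lemma sbarK : involutive (sbar R).
Proof. by move=> y; apply/rowP => j; rewrite !mxE; case: ifP => j3; rewrite j3 ?opprK. Qed.

Lemma Xbar_proj3 y :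
  Xbar R y -> S2 R (proj3 y) /\ (y ord0 3 = 1 \/ y ord0 3 = -1).
Proof. by move=> [x Sx [->|->]]; rewrite proj3_ext4 ext4_last; split => //; [left|right]. Qed.

Lemma Xbar_ext4 x t : S2 R x -> t = 1 \/ t = -1 -> Xbar R (ext4 R x t).
Proof. by move=> Sx [->|->]; exists x => //; [left|right]. Qed.

Lemma Xbar_sbar y : Xbar R y -> Xbar R (sbar R y).
Proof.
move=> [x Sx [->|->]]; rewrite sbar_ext4 ?opprK; apply: Xbar_ext4 => //; by [right|left].
Qed.

Lemma ext4_continuous t : continuous (ext4 R ^~ t).
Proof.
apply: mx_continuous => i j; under eq_fun do rewrite mxE.
case: (nat_of_ord j == 3)%N; [exact: cst_continuous | exact: coord_continuous].
Qed.

Lemma proj3_continuous : continuous proj3.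
Proof.
apply: mx_continuous => i j; under eq_fun do rewrite mxE.
exact: coord_continuous.
Qed.

Lemma sbar_continuous : continuous (sbar R).
Proof.
apply: mx_continuous => i j; under eq_fun do rewrite mxE.
case: (nat_of_ord j == 3)%N; last exact: coord_continuous.
by move=> x; apply: continuousN; apply: coord_continuous.
Qed.

End Sheets.

Section Lifts.
Variable R : realType.
Local Notation mirror t := (sbar R \o t).

Definition normalized {m n} (f : 'rV[R]_n.+1 -> 'rV[R]_m) :=
  forall x, ~ stdsimplex R n x -> f x = 0.

Definition lift_simplex {n} (s : 'rV[R]_n.+1 -> 'rV[R]_3) : 'rV[R]_n.+1 -> 'rV[R]_4 :=
  fun x => if `[< stdsimplex R n x >] then ext4 R (s x) 1 else 0.

Definition proj_simplex {n} (t : 'rV[R]_n.+1 -> 'rV[R]_4) : 'rV[R]_n.+1 -> 'rV[R]_3 :=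
  fun x => if `[< stdsimplex R n x >] then proj3 (t x) else 0.

Lemma normalized_lift n (s : 'rV[R]_n.+1 -> 'rV[R]_3) : normalized (lift_simplex s).
Proof. by move=> x nx; rewrite /lift_simplex asboolF. Qed.

Lemma normalized_proj n (t : 'rV[R]_n.+1 -> 'rV[R]_4) : normalized (proj_simplex t).
Proof. by move=> x nx; rewrite /proj_simplex asboolF. Qed.

Lemma normalized_mirror n (t : 'rV[R]_n.+1 -> 'rV[R]_4) :
  normalized t -> normalized (mirror t).
Proof. by move=> nt x /nt /= ->; rewrite sbar0. Qed.

Lemma proj_lift n (s : 'rV[R]_n.+1 -> 'rV[R]_3) :
  normalized s -> proj_simplex (lift_simplex s) = s.
Proof.
move=> ns; apply: funext => x; rewrite /proj_simplex /lift_simplex.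
by case: (asboolP (stdsimplex R n x)) => sx; [rewrite proj3_ext4 | rewrite ns].
Qed.

Lemma proj_mirror_lift n (s : 'rV[R]_n.+1 -> 'rV[R]_3) :
  normalized s -> proj_simplex (mirror (lift_simplex s)) = s.
Proof.
move=> ns; apply: funext => x; rewrite /proj_simplex /lift_simplex /=.
by case: (asboolP (stdsimplex R n x)) => sx; [rewrite sbar_ext4 proj3_ext4 | rewrite ns].
Qed.

Lemma lift_neq_mirror n (s s' : 'rV[R]_n.+1 -> 'rV[R]_3) :
  lift_simplex s != mirror (lift_simplex s').
Proof.
apply/eqP => /(congr1 (fun f : 'rV[R]_n.+1 -> 'rV[R]_4 => f (vertex0 R n) ord0 3)).
rewrite /= /lift_simplex asboolT; last exact: stdsimplex_vertex0.
by rewrite sbar_ext4 !ext4_last => /eqP; rewrite -subr_eq0 opprK (eqr_nat R 2 0).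
Qed.

Lemma lift_simplexE n (s : 'rV[R]_n.+1 -> 'rV[R]_3) t : normalized s ->
  (lift_simplex s == t) = (s == proj_simplex t) && (lift_simplex (proj_simplex t) == t).
Proof. by move=> ns; apply/eqP/andP => [<-|[/eqP -> /eqP //]]; rewrite proj_lift. Qed.

Lemma mirror_lift_simplexE n (s : 'rV[R]_n.+1 -> 'rV[R]_3) t : normalized s ->
  (mirror (lift_simplex s) == t) =
  (s == proj_simplex t) && (mirror (lift_simplex (proj_simplex t)) == t).
Proof. by move=> ns; apply/eqP/andP => [<-|[/eqP -> /eqP //]]; rewrite proj_mirror_lift. Qed.

Lemma sing_simplex_lift n (Y : set 'rV[R]_3) s : Y `<=` S2 R ->
  sing_simplex R 3 n Y s -> sing_simplex R 4 n (Xbar R) (lift_simplex s).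
Proof.
move=> YS [cs ims _]; split; last exact: normalized_lift.
- have : {within stdsimplex R n, continuous ((ext4 R ^~ 1) \o s)}.
    by apply: within_continuous_comp => // y _; apply: ext4_continuous.
  apply: subspace_eq_continuous => x /set_mem sx.
  by rewrite /lift_simplex /from_subspace /= asboolT.
- move=> _ [x sx <-]; rewrite /lift_simplex asboolT //.
  by apply: Xbar_ext4; [apply/YS/ims; exists x | left].
Qed.

Lemma sing_simplex_mirror n t : sing_simplex R 4 n (Xbar R) t ->
  sing_simplex R 4 n (Xbar R) (mirror t).
Proof.
move=> [ct imt nt]; split; last exact: normalized_mirror.
- by apply: within_continuous_comp => // y _; apply: sbar_continuous.
- by move=> _ [x sx <-]; apply/Xbar_sbar/imt; exists x.
Qed.

Lemma sing_simplex_proj n (Y : set 'rV[R]_3) t :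
  {within stdsimplex R n, continuous t} ->
  (forall x, stdsimplex R n x -> Y (proj3 (t x))) ->
  sing_simplex R 3 n Y (proj_simplex t).
Proof.
move=> ct tY; split; last exact: normalized_proj.
- have : {within stdsimplex R n, continuous (@proj3 R \o t)}.
    by apply: within_continuous_comp => // y _; apply: proj3_continuous.
  apply: subspace_eq_continuous => x /set_mem sx.
  by rewrite /proj_simplex /from_subspace /= asboolT.
- by move=> _ [x sx <-]; rewrite /proj_simplex asboolT //; apply: tY.
Qed.

Lemma Xbar_simplex_sheet n t : sing_simplex R 4 n (Xbar R) t ->
  forall x, stdsimplex R n x -> t x ord0 3 = t (vertex0 R n) ord0 3.
Proof.
move=> [ct imt _]; pose g := (fun y : 'rV[R]_4 => y ord0 3) \o t.
have sign x : stdsimplex R n x -> g x = 1 \/ g x = -1.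
  by move=> sx; apply: (Xbar_proj3 (imt _ _)).2; exists x.
have cg : {within stdsimplex R n, continuous g}.
  by apply: within_continuous_comp => // y _; apply: coord_continuous.
have /connected_intervalP gI :=
  connected_continuous_connected (@stdsimplex_connected R n) cg.
have img x : stdsimplex R n x -> (g @` stdsimplex R n) (g x) by exists x.
have no_zero : ~ (g @` stdsimplex R n) 0.
  by move=> [y sy gy0]; case: (sign y sy); rewrite gy0 => h; lra.
move=> x sx; have sv := stdsimplex_vertex0 R n; change (g x = g (vertex0 R n)).
case: (sign x sx) (sign _ sv) => gx [] gv; rewrite gx gv //; exfalso; apply: no_zero.
  by apply: (gI _ _ (img _ sv) (img _ sx)); rewrite gx gv; apply/andP; split; lra.
by apply: (gI _ _ (img _ sx) (img _ sv)); rewrite gx gv; apply/andP; split; lra.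
Qed.

Lemma Xbar_simplex_lift n t : sing_simplex R 4 n (Xbar R) t ->
  t = lift_simplex (proj_simplex t) \/ t = mirror (lift_simplex (proj_simplex t)).
Proof.
move=> tX; have [_ imt nt] := tX; have sv := stdsimplex_vertex0 R n.
have on_sheet x : stdsimplex R n x ->
    t x = ext4 R (proj_simplex t x) (t (vertex0 R n) ord0 3).
  move=> sx; rewrite -(Xbar_simplex_sheet tX sx) /proj_simplex asboolT //.
  exact: ext4_proj3.
have [_ [v1|v1]] := Xbar_proj3 (imt _ (ex_intro2 _ _ _ sv erefl)); [left|right];
  apply: funext => x; rewrite /lift_simplex /=;
  (case: (asboolP (stdsimplex R n x)) => sx;
   [by rewrite on_sheet // v1 ?sbar_ext4 | by rewrite nt // ?sbar0]).
Qed.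

Lemma eq_mirror n (f g : 'rV[R]_n.+1 -> 'rV[R]_4) : (f == mirror g) = (mirror f == g).
Proof. by apply/eqP/eqP => [->|<-]; apply: funext => x /=; rewrite sbarK. Qed.

Lemma mirror_inj_eq n (f g : 'rV[R]_n.+1 -> 'rV[R]_4) : (mirror f == mirror g) = (f == g).
Proof. by rewrite -eq_mirror; congr (_ == _); apply: funext => x /=; rewrite sbarK. Qed.

End Lifts.

Lemma sum_mul_indicator (V : pzSemiRingType) (T : eqType) (r : seq T) (f : T -> V) x :
  uniq r -> (x \notin r -> f x = 0) ->
  \sum_(y <- r) f y * (if y == x then 1 else 0) = f x.
Proof.
move=> ur fx; have [xr|xr] := boolP (x \in r); last first.
  rewrite fx // big1_seq // => y /andP[_ yr].
  by case: eqP => [yx|]; [move: yr; rewrite yx (negbTE xr) | rewrite mulr0].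
rewrite (perm_big _ (perm_to_rem xr)) big_cons eqxx mulr1 -[RHS]addr0; congr (_ + _).
apply: big1_seq => y /andP[_ yr]; case: eqP => [yx|]; last by rewrite mulr0.
by move: yr; rewrite yx mem_rem_uniqF.
Qed.

Lemma finite_support_seq (T : choiceType) (V : nmodType) (f : T -> V) :
  finite_set [set x | f x != 0] ->
  exists2 r : seq T, uniq r & forall x, (x \in r) = (f x != 0).
Proof.
move=> fin; exists (finmap.enum_fset (fset_set [set x | f x != 0])).
  exact: finmap.fset_uniq.
by move=> x; rewrite in_fset_set //; apply/idP/idP => [/set_mem //|]; exact: mem_set.
Qed.

Section LiftChain.
Variables (R : realType) (K : fieldType).
Local Notation mirror t := (sbar R \o t).
Local Notation chain m n := (('rV[R]_n.+1 -> 'rV[R]_m) -> K).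

(* [1] if [t] is a lift or a mirrored lift, [0] otherwise: both cannot hold. *)
Definition lift_mult n (t : 'rV[R]_n.+1 -> 'rV[R]_4) : K :=
  (if lift_simplex (proj_simplex t) == t then 1 else 0) +
  (if mirror (lift_simplex (proj_simplex t)) == t then 1 else 0).

(* [lift_chain d] is the chain [sum_s d(s) (lift s + sbar o lift s)] of Cbar. *)
Definition lift_chain n (d : chain 3 n) : chain 4 n :=
  fun t => d (proj_simplex t) * lift_mult t.

Definition normal_chain m n (d : chain m n) := forall s, ~ normalized s -> d s = 0.

Lemma lift_indicator n (s : 'rV[R]_n.+1 -> 'rV[R]_3) t : normalized s ->
  (if lift_simplex s == t then 1 else 0) + (if mirror (lift_simplex s) == t then 1 else 0)
  = (if s == proj_simplex t then 1 else 0) * lift_mult t.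
Proof.
move=> ns; rewrite lift_simplexE // mirror_lift_simplexE //.
by case: (s == proj_simplex t); rewrite ?mul1r ?mul0r //= addr0.
Qed.

Lemma lift_mult_lift n (s : 'rV[R]_n.+1 -> 'rV[R]_3) :
  normalized s -> lift_mult (lift_simplex s) = 1.
Proof.
move=> ns; rewrite /lift_mult proj_lift // eqxx.
by rewrite eq_sym (negbTE (lift_neq_mirror _ _)) addr0.
Qed.

Lemma lift_mult_mirror n (s : 'rV[R]_n.+1 -> 'rV[R]_3) :
  normalized s -> lift_mult (mirror (lift_simplex s)) = 1.
Proof.
by move=> ns; rewrite /lift_mult proj_mirror_lift // eqxx (negbTE (lift_neq_mirror _ _)) add0r.
Qed.

Lemma lift_chain_lift n (d : chain 3 n) s :
  normalized s -> lift_chain d (lift_simplex s) = d s.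
Proof. by move=> ns; rewrite /lift_chain lift_mult_lift // proj_lift // mulr1. Qed.

Lemma lift_chain_mirror n (d : chain 3 n) s :
  normalized s -> lift_chain d (mirror (lift_simplex s)) = d s.
Proof. by move=> ns; rewrite /lift_chain lift_mult_mirror // proj_mirror_lift // mulr1. Qed.

Lemma lift_mult_neq0 n (t : 'rV[R]_n.+1 -> 'rV[R]_4) : lift_mult t != 0 ->
  t = lift_simplex (proj_simplex t) \/ t = mirror (lift_simplex (proj_simplex t)).
Proof.
rewrite /lift_mult; case: (lift_simplex _ =P t) => [lt|_]; first by left.
by case: (mirror _ =P t) => [mt|_]; [right | rewrite addr0 eqxx].
Qed.

Lemma lift_chain_neq0 n (d : chain 3 n) t : lift_chain d t != 0 ->
  d (proj_simplex t) != 0 /\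
  (t = lift_simplex (proj_simplex t) \/ t = mirror (lift_simplex (proj_simplex t))).
Proof. by rewrite /lift_chain mulf_eq0 negb_or => /andP[? /lift_mult_neq0]. Qed.

Lemma lift_chain_lincomb n k (a : 'I_k -> K) (cs : 'I_k -> chain 3 n) :
  lift_chain (lincomb a cs) = lincomb a (fun r => lift_chain (cs r)).
Proof.
apply: funext => t; rewrite /lift_chain /lincomb big_distrl /=.
by apply: eq_bigr => r _; rewrite mulrA.
Qed.

Lemma lift_chain_inj n (d d' : chain 3 n) :
  normal_chain d -> normal_chain d' -> lift_chain d = lift_chain d' -> d = d'.
Proof.
move=> nd nd' dd'; apply: funext => s.
have [ns|ns] := pselect (normalized s); last by rewrite nd // nd'.
by rewrite -(lift_chain_lift d ns) dd' lift_chain_lift.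
Qed.

Lemma normal_chain_lincomb m n k (a : 'I_k -> K) (cs : 'I_k -> chain m n) :
  (forall r, normal_chain (cs r)) -> normal_chain (lincomb a cs).
Proof. by move=> ncs s ns; apply: big1 => r _; rewrite ncs // mulr0. Qed.

Lemma sing_chain_normal m n (Y : set 'rV[R]_m) (d : chain m n) :
  sing_chain R K m n Y d -> normal_chain d.
Proof.
move=> [_ sd] s ns; apply/eqP; apply: contrapT => /negP ds.
by apply: ns; have [] := sd s ds.
Qed.

Lemma stdsimplex_face_incl n i x : stdsimplex R n x ->
  stdsimplex R n.+1 (face_incl R n i x).
Proof.
move=> [x0 x1]; split => [j|].
  by rewrite mxE; case: (unlift i j) => [j'|] //; apply: x0.
rewrite (bigD1_ord i) //= mxE unlift_none add0r -x1.
by apply: eq_bigr => j _; rewrite mxE liftK.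
Qed.

Lemma normalized_face m n (s : 'rV[R]_n.+2 -> 'rV[R]_m) i :
  normalized (face R m n s i).
Proof. by move=> x nx; rewrite /face asboolF. Qed.

Lemma face_lift n (s : 'rV[R]_n.+2 -> 'rV[R]_3) i :
  face R 4 n (lift_simplex s) i = lift_simplex (face R 3 n s i).
Proof.
apply: funext => x; rewrite /face /lift_simplex.
case: (asboolP (stdsimplex R n x)) => sx //.
by rewrite asboolT //; apply: stdsimplex_face_incl.
Qed.

Lemma face_mirror n (t : 'rV[R]_n.+2 -> 'rV[R]_4) i :
  face R 4 n (mirror t) i = mirror (face R 4 n t i).
Proof.
apply: funext => x; rewrite /face /=.
by case: (asboolP (stdsimplex R n x)) => sx //; rewrite sbar0.
Qed.

Definition face_coef m n (s : 'rV[R]_n.+2 -> 'rV[R]_m) (t : 'rV[R]_n.+1 -> 'rV[R]_m) : K :=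
  \sum_(i < n.+2) (-1) ^+ i * (if face R m n s i == t then 1 else 0).

Lemma bdry_big_seq m n (c : chain m n.+1) r t : uniq r ->
  [set s | c s != 0] `<=` [set` r] ->
  bdry R K m n c t = \sum_(s <- r) c s * face_coef s t.
Proof.
move=> ur sr; rewrite /bdry (fsbig_fwiden r) //.
by move=> s [_ /= /negP]; rewrite negbK => /eqP ->; rewrite mul0r.
Qed.

Lemma normal_chain_bdry m n (c : chain m n.+1) : normal_chain (bdry R K m n c).
Proof.
move=> t nt; rewrite /bdry fsbig1 // => s _; rewrite big1 ?mulr0 // => i _.
case: eqP => [fst|]; last by rewrite mulr0.
by exfalso; apply: nt; rewrite -fst; apply: normalized_face.
Qed.

Lemma face_coef_lift n (s : 'rV[R]_n.+2 -> 'rV[R]_3) t : normalized s ->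
  face_coef (lift_simplex s) t + face_coef (mirror (lift_simplex s)) t
  = face_coef s (proj_simplex t) * lift_mult t.
Proof.
move=> ns; rewrite /face_coef -big_split big_distrl /=.
apply: eq_bigr => i _; rewrite face_mirror face_lift -mulrDr lift_indicator ?mulrA //.
exact: normalized_face.
Qed.

Lemma uniq_lifts n (r : seq ('rV[R]_n.+1 -> 'rV[R]_3)) :
  uniq r -> {in r, forall s, normalized s} ->
  uniq (map (@lift_simplex R n) r ++ map (fun s => mirror (lift_simplex s)) r).
Proof.
move=> ur nr; rewrite cat_uniq; apply/and3P; split.
- rewrite map_inj_in_uniq // => s s' sr s'r ss'.
  by rewrite -(proj_lift (nr _ sr)) ss' (proj_lift (nr _ s'r)).
- apply/hasPn => _ /mapP [s _ ->]; apply/mapP => [[s' _]].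
  by move/eqP; rewrite eq_sym (negbTE (lift_neq_mirror _ _)).
- rewrite map_inj_in_uniq // => s s' sr s'r ss'.
  by rewrite -(proj_mirror_lift (nr _ sr)) ss' (proj_mirror_lift (nr _ s'r)).
Qed.

Lemma bdry_lift_chain n (Y : set 'rV[R]_3) (d : chain 3 n.+1) :
  sing_chain R K 3 n.+1 Y d ->
  bdry R K 4 n (lift_chain d) = lift_chain (bdry R K 3 n d).
Proof.
move=> [fd sd]; apply: funext => t.
have [r ur inr] := finite_support_seq fd.
have nr s : s \in r -> normalized s by rewrite inr => /sd [].
rewrite (@bdry_big_seq _ _ _ (map (@lift_simplex R n.+1) r ++
    map (fun s => mirror (lift_simplex s)) r)); first last.
- move=> s /= /lift_chain_neq0 [ds [sE|sE]]; rewrite /= mem_cat; apply/orP;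
    [left|right]; apply/mapP; exists (proj_simplex s) => //; by rewrite inr.
- exact: uniq_lifts.
rewrite /lift_chain (bdry_big_seq _ ur); last by move=> s /= ds; rewrite /= inr.
rewrite big_cat !big_map /= big_distrl /= -big_split /= big_seq [RHS]big_seq.
apply: eq_bigr => s sr; have ns := nr _ sr.
rewrite -/(lift_chain d (lift_simplex s)) -/(lift_chain d (mirror (lift_simplex s))).
by rewrite lift_chain_lift // lift_chain_mirror // -mulrDr face_coef_lift // mulrA.
Qed.

Lemma phibar_leP (phi : 'rV[R]_4 -> R) n (c : chain 4 n) u :
  (phibar R K phi n c <= u%:E)%E <->
  (forall s x, c s != 0 -> stdsimplex R n x -> phi (s x) <= u).
Proof.
split=> [cu s x cs sx | cu].
  rewrite -lee_fin; apply: le_trans cu; apply: ereal_sup_ubound.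
  by exists s => //; exists x.
by apply: ge_ereal_sup => _ [s cs [x sx <-]]; rewrite lee_fin; apply: cu.
Qed.

Lemma Cbar_mirror n (c : chain 4 n) t : Cbar R K n c -> c (mirror t) = c t.
Proof.
move=> [p [a [ss [_ ->]]]]; apply: eq_bigr => r _.
by rewrite addrC mirror_inj_eq eq_mirror.
Qed.

Lemma sing_chain_lift_chain n (Y : set 'rV[R]_3) (d : chain 3 n) : Y `<=` S2 R ->
  sing_chain R K 3 n Y d -> sing_chain R K 4 n (Xbar R) (lift_chain d).
Proof.
move=> YS [fd sd]; split.
  apply: (@sub_finite_set _ _ ([set lift_simplex s | s in [set s | d s != 0]] `|`
                               [set mirror (lift_simplex s) | s in [set s | d s != 0]])).
    by move=> t /lift_chain_neq0 [ds [tE|tE]]; [left|right]; exists (proj_simplex t).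
  by rewrite finite_setU; split; apply: finite_image.
move=> t /lift_chain_neq0 [/sd ds [->|->]]; first exact: sing_simplex_lift YS ds.
exact/sing_simplex_mirror/(sing_simplex_lift YS ds).
Qed.

Lemma Cbar_lift_chain n (Y : set 'rV[R]_3) (d : chain 3 n) : Y `<=` S2 R ->
  sing_chain R K 3 n Y d -> Cbar R K n (lift_chain d).
Proof.
move=> YS [fd sd]; have [r ur inr] := finite_support_seq fd.
have nr s : s \in r -> normalized s by rewrite inr => /sd [].
pose s0 : 'rV[R]_n.+1 -> 'rV[R]_3 := fun _ => 0.
exists (size r), (fun i => d (nth s0 r i)), (fun i => lift_simplex (nth s0 r i)).
split=> [i|].
  by apply: sing_simplex_lift YS _; apply: sd; rewrite /= -inr mem_nth.
apply: funext => t.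
transitivity (\sum_(s <- r) d s * (if s == proj_simplex t then 1 else 0) * lift_mult t).
  by rewrite /lift_chain -big_distrl /= sum_mul_indicator // inr negbK => /eqP.
rewrite (big_nth s0) big_mkord; apply: eq_bigr => i _.
by rewrite -mulrA -lift_indicator //; apply/nr/mem_nth.
Qed.

Lemma phibar_lift_chain (phi : 'rV[R]_4 -> R) u n (d : chain 3 n) :
  sing_chain R K 3 n (S2 R `&` [set x | phi' R phi x <= u]) d ->
  (phibar R K phi n (lift_chain d) <= u%:E)%E.
Proof.
move=> [_ sd]; apply/phibar_leP => t x /lift_chain_neq0 [/sd [_ ims _] tE] sx.
have [_ /=] := ims _ (ex_intro2 _ _ x sx erefl).
rewrite /phi' ge_max => /andP[le1 le2].
by case: tE => ->; rewrite /lift_simplex /= asboolT // sbar_ext4.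
Qed.

Lemma lift_chain_sublevel (phi : 'rV[R]_4 -> R) u n (d : chain 3 n) :
  S2_sub R K (phi' R phi) u n d -> Cbar_sub R K phi u n (lift_chain d).
Proof.
move=> dS; have YS : S2 R `&` [set x | phi' R phi x <= u] `<=` S2 R by move=> ? [].
split; first exact: sing_chain_lift_chain YS dS.
by split; [exact: Cbar_lift_chain YS dS | exact: phibar_lift_chain].
Qed.

Definition descend_chain n (c : chain 4 n) : chain 3 n :=
  fun s => if `[< normalized s >] then c (lift_simplex s) else 0.

Lemma descend_chain_neq0 n (c : chain 4 n) s :
  descend_chain c s != 0 -> normalized s /\ c (lift_simplex s) != 0.
Proof. by rewrite /descend_chain; case: (asboolP (normalized s)); rewrite ?eqxx. Qed.

Lemma lift_descend_chain n (c : chain 4 n) :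
  sing_chain R K 4 n (Xbar R) c -> Cbar R K n c -> lift_chain (descend_chain c) = c.
Proof.
move=> [_ sc] cC; apply: funext => t.
rewrite /lift_chain /descend_chain asboolT; last exact: normalized_proj.
have [ct0|ct0] := eqVneq (c t) 0.
  rewrite ct0; have [->|/lift_mult_neq0 [tE|tE]] := eqVneq (lift_mult t) 0.
  - by rewrite mulr0.
  - by rewrite -tE ct0 mul0r.
  - by rewrite -(Cbar_mirror _ cC) -tE ct0 mul0r.
have [tE|tE] := Xbar_simplex_lift (sc _ ct0).
  by rewrite {2}tE lift_mult_lift ?mulr1 -?tE //; apply: normalized_proj.
rewrite {2}tE lift_mult_mirror ?mulr1; last exact: normalized_proj.
by rewrite -(Cbar_mirror _ cC) -tE.
Qed.

Lemma descend_chain_sublevel (phi : 'rV[R]_4 -> R) u n (c : chain 4 n) :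
  Cbar_sub R K phi u n c -> S2_sub R K (phi' R phi) u n (descend_chain c).
Proof.
move=> [[fc sc] [cC /phibar_leP cu]]; split.
  apply: (@sub_finite_set _ _ [set proj_simplex t | t in [set t | c t != 0]]).
    by move=> s /descend_chain_neq0 [ns cs]; exists (lift_simplex s); last exact: proj_lift.
  exact: finite_image.
move=> s /descend_chain_neq0 [ns cs]; rewrite -(proj_lift ns).
have [ct imt _] := sc _ cs; apply: sing_simplex_proj => // x sx.
have := imt _ (ex_intro2 _ _ x sx erefl).
rewrite /lift_simplex asboolT // proj3_ext4 => /Xbar_proj3 [S2x _].
split; first by rewrite proj3_ext4 in S2x.
rewrite /= /phi' ge_max; apply/andP; split.
  by have := cu _ _ cs sx; rewrite /lift_simplex asboolT.
have cs' : c (mirror (lift_simplex s)) != 0 by rewrite Cbar_mirror.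
by have := cu _ _ cs' sx; rewrite /lift_simplex /= asboolT // sbar_ext4.
Qed.

Lemma lift_chain_onto (phi : 'rV[R]_4 -> R) u n (c : chain 4 n) :
  Cbar_sub R K phi u n c ->
  exists2 d, S2_sub R K (phi' R phi) u n d & c = lift_chain d.
Proof.
move=> cS; exists (descend_chain c); first exact: descend_chain_sublevel.
by have [cX [cC _]] := cS; rewrite lift_descend_chain.
Qed.

End LiftChain.

Theorem mainTheorem7 (R : realType) (K : fieldType) (phi : 'rV[R]_4 -> R) :
  {within Xbar R, continuous phi} ->
  forall (n : nat) (u v : R), u < v ->
    pbn_equal R K 4 3 (Cbar_sub R K phi u) (Cbar_sub R K phi v)
              (S2_sub R K (phi' R phi) u) (S2_sub R K (phi' R phi) v) n.
Proof.
move=> _ n u v _.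
apply: (@pbn_equal_iso R K 4 3 _ _ _ _ (@lift_chain R K) (@normal_chain R K 3)).
- exact: lift_chain_lincomb.
- exact: lift_chain_inj.
- exact: normal_chain_lincomb.
- exact: normal_chain_bdry.
- by move=> m c /sing_chain_normal.
- by move=> m d [] /bdry_lift_chain.
- by move=> m c /lift_chain_sublevel.
- by move=> m c /lift_chain_sublevel.
- by move=> m c /lift_chain_onto.
- by move=> m c /lift_chain_onto.
Qed.
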